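(* Let $P$ be a polygon with vertex set $V$ and a non-empty dissection $D$, and let $d=\{\zeta,\eta\}\in D$ be such that $D = \{d\}\cup D_2$ where $D_2$ is a dissection of the subpolygon with vertex set $V_2 = \{\varepsilon \in V : \eta \le \varepsilon \le \zeta\}$. Let $U_1 = \{\varepsilon\in V : \zeta<\varepsilon<\eta\}$ and $U_2 = \{\varepsilon\in V : \eta<\varepsilon<\zeta\}$. If $\alpha \in U_1$, $\beta \in U_2$ and $\pi = (\pi_1,\dots,\pi_p) \in \mathcal{T}_{P,D}(\alpha,\beta)$, then $\pi_2 \in \{\zeta,\eta\}$.
   Context: A polygon is a finite set $V$ of at least three vertices with a cyclic order, pictured as a convex polygon in the plane with vertices anticlockwise. ''$a\le\varepsilon\le b$'' means $\varepsilon$ lies on the cyclic interval from $a$ to $b$ in the positive direction, endpoints included; ''$<$'' excludes the corresponding endpoint. A subpolygon is a subset of at least three vertices with induced cyclic order. A diagonal is a two-element subset of $V$ (edges included); non-edges are internal. Diagonals cross if they consist of four distinct vertices $\alpha,\beta,\gamma,\delta$ appearing cyclically as $\alpha,\gamma,\beta,\delta$ or $\alpha,\delta,\beta,\gamma$. A dissection is a set of pairwise non-crossing internal diagonals. For vertices $\pi_1\neq\pi_p$, a $T$-path from $\pi_1$ to $\pi_p$ w.r.t. $D$ is a tuple $(\pi_1,\dots,\pi_p)$ of vertices with: (i) $\{\pi_1,\pi_2\},\dots,\{\pi_{p-1},\pi_p\}$ pairwise different diagonals; (ii) no $\{\pi_i,\pi_{i+1}\}$ crosses a diagonal of $D$;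 (iii) each $\{\pi_{2j},\pi_{2j+1}\}$ lies in $D$, and these cross the segment $\{\pi_1,\pi_p\}$ at pairwise different points progressing monotonically from $\pi_1$ to $\pi_p$. $\mathcal{T}_{P,D}(\alpha,\beta)$ is the set of such paths from $\alpha$ to $\beta$. *)

From mathcomp Require Import all_boot.
Set Implicit Arguments. Unset Strict Implicit. Unset Printing Implicit Defensive.

(* A polygon with n vertices is modelled by 'I_n with the cyclic order
   0 -> 1 -> ... -> n-1 -> 0 (anticlockwise = increasing mod n). *)
Section Polygon.
Variable n : nat.
Implicit Types a b e : 'I_n.

Definition cdist a b : nat := (b + n - a) %% n.

(* a <= e <= b  (closed cyclic interval in positive direction) *)
Definition cle3 a e b : bool := cdist a e <= cdist a b.
(* a < e < b  (open cyclic interval) *)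
Definition clt3 a e b : bool := (0 < cdist a e) && (cdist a e < cdist a b).

Definition crossD (d f : {set 'I_n}) : Prop :=
  exists a b c e, [/\ d = [set a; b], f = [set c; e], uniq [:: a; b; c; e],
                     clt3 a c b & clt3 b e a].

Definition diagW (W : {set 'I_n}) (d : {set 'I_n}) : Prop :=
  #|d| = 2 /\ d \subset W.

Definition edgeW (W : {set 'I_n}) (d : {set 'I_n}) : Prop :=
  exists a b, [/\ d = [set a; b], a \in W, b \in W, a != b &
     [forall e in W, ~~ clt3 a e b]].

Definition internalW (W : {set 'I_n}) (d : {set 'I_n}) : Prop :=
  diagW W d /\ ~ edgeW W d.

Definition dissection (W : {set 'I_n}) (D : {set {set 'I_n}}) : Prop :=
  (forall d, d \in D -> internalW W d) /\
  (forall d f, d \in D -> f \in D -> ~ crossD d f).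

(* For diagonals e, f (of a dissection) both crossing the chord {a,b}:
   e meets the chord strictly before f when going from a to b, i.e.
   f lies (weakly) on the b-side of e and e <> f. *)
Definition before a b (e f : {set 'I_n}) : Prop :=
  exists x y u v, [/\ e = [set x; y], f = [set u; v] & e != f] /\ [/\
     [/\ clt3 a x b, clt3 b y a, clt3 a u b & clt3 b v a],
     cle3 x u b & cle3 b v y].

(* T-paths from a to b w.r.t. D, the path (pi_1,...,pi_p) being the
   sequence s (0-indexed: s`_0 = pi_1). step i = {pi_(i+1), pi_(i+2)}. *)
Definition tpath (D : {set {set 'I_n}}) a b (s : seq 'I_n) : Prop :=
  let step i := [set nth a s i; nth a s i.+1] in
  let m := (size s).-1 in
  [/\ a != b, 2 <= size s, nth a s 0 = a & last a s = b] /\ [/\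
      (forall i, i < m -> nth a s i != nth a s i.+1),
      (forall i j, i < m -> j < m -> i != j -> step i != step j),
      (forall i, i < m -> forall d, d \in D -> ~ crossD (step i) d) &
      (* (iii) even steps {pi_2j, pi_2j+1} lie in D, cross {pi_1, pi_p},
         at points progressing monotonically from pi_1 to pi_p *)
      [/\ (forall i, i < m -> odd i -> step i \in D /\ crossD (step i) [set a; b]) &
          (forall i j, odd i -> odd j -> i < j -> j < m -> before a b (step i) (step j))]].

End Polygon.

From mathcomp Require Import all_boot zify.
Set Implicit Arguments. Unset Strict Implicit.

(* The first step {alpha, pi_2} of the path may not cross d, so pi_2 is not
   in U_2.  If pi_2 were in U_1 it would differ from beta, so the path has a
   second step {pi_2, pi_3}, which lies in D = {d} u D_2.  It is not d, hence
   it is a diagonal of the subpolygon V_2, which does not contain pi_2. *)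

Lemma cdistE n (a b : 'I_n) :
  (a <= b /\ cdist a b = b - a) \/ (b < a /\ cdist a b = b + n - a).
Proof.
rewrite /cdist; have := ltn_ord a; have := ltn_ord b => hb ha.
case: (leqP a b) => h; [left|right]; split => //.
  by rewrite -addnBAC // modnDr modn_small //; lia.
by rewrite modn_small //; lia.
Qed.

(* Once every [cdist] is split by [cdistE] into its two linear forms, a
   statement about the cyclic order is plain linear arithmetic. *)
Ltac cyclic_order :=
  unfold clt3, cle3 in *;
  repeat match goal with
  | H : context [@cdist ?n ?x ?y] |- _ => move: H
  end;
  repeat match goal with
  | |- context [@cdist ?n ?x ?y] =>
      have := @cdistE n x y; have := ltn_ord x; have := ltn_ord y;
      move: (@cdist n x y) => ? ? ? [[? ?]|[? ?]]
  end;
  rewrite -?val_eqE /=; intros; subst; lia.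

Section CyclicOrder.
Variable n : nat.
Implicit Types a b e x y : 'I_n.

Lemma clt3_cle3F a b e : clt3 a e b -> cle3 b e a = false.
Proof. by move=> h; apply/negbTE; move: h; cyclic_order. Qed.

Lemma clt3_or_clt3 a b e :
  a != b -> e != a -> e != b -> clt3 a e b || clt3 b e a.
Proof. by move=> ab ea eb; move: ab ea eb; cyclic_order. Qed.

Lemma crossD_opposite_arcs a b x y :
  a != b -> clt3 a x b -> clt3 b y a -> crossD [set x; y] [set a; b].
Proof.
move=> ab xab yba; exists x, y, b, a; split => //; first exact: setUC.
- by rewrite /= !inE !negb_or; move: ab xab yba; cyclic_order.
- by move: ab xab yba; cyclic_order.
- by move: ab xab yba; cyclic_order.
Qed.

End CyclicOrder.

Section TPath.
Variables (n : nat) (D : {set {set 'I_n}}) (a b : 'I_n) (s : seq 'I_n).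
Hypothesis path_s : tpath D a b s.

Lemma tpath_first_step_ncross d : d \in D -> ~ crossD [set a; nth a s 1] d.
Proof.
have [[_ size_s s0 _] [_ _ ncross _]] := path_s.
by rewrite -{1}s0; apply: ncross; lia.
Qed.

Lemma tpath_second_step_in : nth a s 1 != b -> [set nth a s 1; nth a s 2] \in D.
Proof.
have [[_ size_s _ last_s] [_ _ _ [odd_steps _]]] := path_s.
move=> not_last; have size_gt2 : 1 < (size s).-1.
  rewrite ltnNge; apply: contra not_last => size_le2.
  by rewrite -last_s -nth_last; apply/eqP; congr nth; lia.
by have [] := odd_steps 1 size_gt2 isT.
Qed.

End TPath.

Theorem lemma3p7 (n : nat) (D D2 : {set {set 'I_n}}) (zeta eta : 'I_n)
    (alpha beta : 'I_n) (s : seq 'I_n) :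
  3 <= n ->
  dissection [set: 'I_n] D ->
  D != set0 ->
  zeta != eta ->
  [set zeta; eta] \in D ->
  D = [set zeta; eta] |: D2 ->
  3 <= #|[set e : 'I_n | cle3 eta e zeta]| ->
  dissection [set e : 'I_n | cle3 eta e zeta] D2 ->
  clt3 zeta alpha eta ->
  clt3 eta beta zeta ->
  tpath D alpha beta s ->
  nth alpha s 1 \in [set zeta; eta].
Proof.
move=> _ _ _ zeta_eta dD D_E _ [D2_int _] alpha_U1 beta_U2 path_s.
set p := nth alpha s 1.
have p_notU2 : ~~ clt3 eta p zeta.
  apply/negP => p_U2; apply: tpath_first_step_ncross path_s _ dD _.
  exact: crossD_opposite_arcs.
apply/negPn/negP; rewrite !inE negb_or => /andP[p_zeta p_eta].
have p_U1 : clt3 zeta p eta.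
  by have := clt3_or_clt3 zeta_eta p_zeta p_eta; rewrite (negbTE p_notU2) orbF.
have p_beta : p != beta by apply: contraNneq p_notU2 => ->.
move: (tpath_second_step_in path_s p_beta); rewrite D_E => /setU1P[step_d|].
  have : p \in [set zeta; eta] by rewrite -step_d !inE eqxx.
  by rewrite !inE (negbTE p_zeta) (negbTE p_eta).
move=> /D2_int[[_ /subsetP sub] _].
by have := sub p; rewrite !inE eqxx clt3_cle3F // => /(_ isT).
Qed.
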